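(* For integers $0\le a<b$ let $\Delta_3([a,b))$ denote the number of evil integers in $[a,b)$ divisible by $3$ minus the number of odious integers in $[a,b)$ divisible by $3$ (both even and odd integers are counted). Then: 1) For every integer $n\ge 1$: $\Delta_3([0,2^n))=2\cdot 3^{\frac n2-1}$ if $n$ is even, and $\Delta_3([0,2^n))=3^{\frac{n-1}{2}}$ if $n$ is odd. 2) For integers $n,m$: $$\Delta_3([2^n,2^n+2^m))=\begin{cases}3^{\lfloor\frac{m-1}{2}\rfloor}, & n \text{ odd},\ 1\le m\le n-1,\\ 3^{\frac m2-1}, & n \text{ and } m \text{ even},\ 2\le m\le n-2,\\ 0, & n \text{ even},\ m \text{ odd},\ 1\le m\le n-1.\end{cases}$$ 3) For integers $n,m$: $$\Delta_3([2^n+2^{n-2},\,2^n+2^{n-2}+2^m))=\begin{cases}-3^{\lfloor\frac{m-1}{2}\rfloor}, & n \text{ even},\ 1\le m\le n-3,\\ -3^{\frac m2-1}, & n \text{ odd},\ m \text{ even},\ 2\le m\le n-3,\\ 0, & n \text{ and } m \text{ odd},\ 1\le m\le n-4.\end{cases}$$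
   Context: A nonnegative integer is called evil if its binary expansion contains an even number of 1's, and odious if it contains an odd number of 1's; in particular $0$ is evil. An interval $[a,b)$ means the set of integers $x$ with $a\le x<b$. *)

From mathcomp Require Import all_boot all_order all_algebra.
Set Implicit Arguments. Unset Strict Implicit. Unset Printing Implicit Defensive.
Import GRing.Theory Num.Theory.

Fixpoint popcount_aux (fuel x : nat) : nat :=
  match fuel with
  | 0 => 0
  | f.+1 => if x == 0 then 0 else odd x + popcount_aux f x./2
  end.
Definition popcount (x : nat) : nat := popcount_aux x x.

Definition evil (x : nat) : bool := ~~ odd (popcount x).
Definition odious (x : nat) : bool := odd (popcount x).

Definition Delta3 (a b : nat) : int :=
  (#|[set x : 'I_b | (a <= x) && (3 %| x) && evil x]|)%:Z
  - (#|[set x : 'I_b | (a <= x) && (3 %| x) && odious x]|)%:Z.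

(* Write [tm x = (-1) ^ popcount x] for the signed Thue-Morse sequence, so that
   Delta_3 sums [tm] over the multiples of 3.  On a window [a, a + 2 ^ m) whose
   offset [a] only has bits above those of [i < 2 ^ m], [tm (i + a) = +-tm i],
   and Delta_3 becomes +-S_m(-a), where S_m(r) sums [tm y] over [y < 2 ^ m],
   [y = r (mod 3)].  Splitting [y] by parity gives
   S_(m+1)(r) = S_m(2r) - S_m(2r+1), hence
   S_(m+2)(r) = 2 S_m(r) - S_m(r+1) - S_m(r+2) = 3 S_m(r)
   for [m >= 1], because the three residue sums add up to [sum tm = 0].
   So S_m(r) is [3 ^ k] times S_1(r) or S_2(r), which are computed directly. *)

From mathcomp Require Import all_boot all_order all_algebra.
From mathcomp Require Import zify ring.
Import GRing.Theory Num.Theory.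
Local Open Scope ring_scope.

Lemma popcount_aux_fuel f g x :
  (x <= f)%N -> (x <= g)%N -> popcount_aux f x = popcount_aux g x.
Proof.
elim: f g x => [|f IH] [|g] x /=.
- by [].
- by rewrite leqn0 => /eqP -> _.
- by move=> _; rewrite leqn0 => /eqP ->; rewrite eqxx.
- move=> hf hg; case: eqP => // /eqP x0; congr (_ + _)%N; apply: IH.
  + rewrite -divn2; lia.
  + rewrite -divn2; lia.
Qed.

Lemma popcountE x : popcount x = (odd x + popcount x./2)%N.
Proof.
rewrite /popcount; case: x => [|x] //=.
congr (_ + _)%N; apply: popcount_aux_fuel => //; rewrite ?ltnS ?half_leq // -?divn2; lia.
Qed.

Lemma popcount_double z : popcount z.*2 = popcount z.
Proof. by rewrite popcountE odd_double doubleK. Qed.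

Lemma popcount_doubleS z : popcount z.*2.+1 = (popcount z).+1.
Proof. by rewrite popcountE /= odd_double uphalf_double. Qed.

Lemma popcountD_pow2 n y : (y < 2 ^ n)%N -> popcount (2 ^ n + y) = (popcount y).+1.
Proof.
elim: n y => [|n IH] y; first by rewrite expn0 ltnS leqn0 => /eqP ->.
move=> hy; rewrite popcountE [popcount y]popcountE.
have -> : (2 ^ n.+1 + y)./2 = (2 ^ n + y./2)%N by rewrite -!divn2 expnS; lia.
rewrite IH; last by rewrite -divn2; move: hy; rewrite expnS; lia.
by rewrite oddD oddX /= addnS.
Qed.

Definition tm (x : nat) : int := (-1) ^+ popcount x.

Lemma tm_double z : tm z.*2 = tm z.
Proof. by rewrite /tm popcount_double. Qed.

Lemma tm_doubleS z : tm z.*2.+1 = - tm z.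
Proof. by rewrite /tm popcount_doubleS exprS mulN1r. Qed.

Lemma tm_addn_pow2 n y : (y < 2 ^ n)%N -> tm (y + 2 ^ n) = - tm y.
Proof. by move=> hy; rewrite /tm addnC popcountD_pow2 // exprS mulN1r. Qed.

Lemma big_nat_double (R : nmodType) m (F : nat -> R) :
  \sum_(0 <= x < m.*2) F x = \sum_(0 <= y < m) (F y.*2 + F y.*2.+1).
Proof.
elim: m => [|m IH]; first by rewrite !big_geq.
by rewrite doubleS !big_nat_recr //= IH addrA.
Qed.

Lemma sum_tm_pow2 n : (0 < n)%N -> \sum_(0 <= y < 2 ^ n) tm y = 0.
Proof.
case: n => // n _; rewrite expnS mul2n big_nat_double big1 // => y _.
by rewrite tm_double tm_doubleS subrr.
Qed.

Definition tm_sum n r : int := \sum_(0 <= y < 2 ^ n) (y == r %[mod 3])%:R * tm y.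

Lemma tm_sum_mod n r1 r2 : r1 = r2 %[mod 3] -> tm_sum n r1 = tm_sum n r2.
Proof. by rewrite /tm_sum => ->. Qed.

Lemma tm_sumS n r : tm_sum n.+1 r = tm_sum n (2 * r) - tm_sum n (2 * r).+1.
Proof.
rewrite /tm_sum expnS mul2n big_nat_double -sumrB; apply: eq_bigr => y _.
rewrite tm_double tm_doubleS.
have -> : (y.*2 == r %[mod 3]) = (y == 2 * r %[mod 3]) by apply/eqP/eqP; lia.
have -> : (y.*2.+1 == r %[mod 3]) = (y == (2 * r).+1 %[mod 3]) by apply/eqP/eqP; lia.
by rewrite mulrN.
Qed.

Lemma tm_sumSS n r :
  tm_sum n.+2 r = 2 * tm_sum n r - tm_sum n r.+1 - tm_sum n r.+2.
Proof.
rewrite !tm_sumS (@tm_sum_mod n (2 * (2 * r)) r); last by lia.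
rewrite (@tm_sum_mod n (2 * (2 * r).+1) r.+2); last by lia.
rewrite (@tm_sum_mod n (2 * (2 * r)).+1 r.+1); last by lia.
rewrite (@tm_sum_mod n (2 * (2 * r).+1).+1 r); last by lia.
ring.
Qed.

Lemma tm_sum_residues n r :
  tm_sum n r + tm_sum n r.+1 + tm_sum n r.+2 = \sum_(0 <= y < 2 ^ n) tm y.
Proof.
rewrite /tm_sum -!big_split; apply: eq_bigr => y _ /=.
have one : ((y == r %[mod 3]) + (y == r.+1 %[mod 3]) + (y == r.+2 %[mod 3]) = 1)%N.
  by lia.
by rewrite -!mulrDl -!natrD one mul1r.
Qed.

Lemma tm_sumSS_pos n r : (0 < n)%N -> tm_sum n.+2 r = 3 * tm_sum n r.
Proof.
move=> n_gt0; have := tm_sum_residues n r; rewrite sum_tm_pow2 // => tot.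
rewrite tm_sumSS; apply/eqP; rewrite -subr_eq0; apply/eqP.
by rewrite -[RHS]oppr0 -tot; ring.
Qed.

Lemma tm_sum_addn_double n k r :
  (0 < n)%N -> tm_sum (k.*2 + n) r = (3 ^ k)%:Z * tm_sum n r.
Proof.
move=> n_gt0; elim: k => [|k IH]; first by rewrite mul1r.
by rewrite doubleS !addSn tm_sumSS_pos ?addn_gt0 ?n_gt0 ?orbT // IH expnS PoszM mulrA.
Qed.

Lemma tm_sum_odd m r : odd m -> tm_sum m r = (3 ^ m.-1./2)%:Z * tm_sum 1 r.
Proof.
move=> m_odd; rewrite -(odd_double_half m) m_odd add1n /= doubleK.
by rewrite -addn1 tm_sum_addn_double.
Qed.

Lemma tm_sum_even m r :
  ~~ odd m -> (0 < m)%N -> tm_sum m r = (3 ^ (m./2 - 1))%:Z * tm_sum 2 r.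
Proof.
move=> /negbTE m_even; rewrite -(odd_double_half m) m_even add0n doubleK.
case: m./2 => // k _; by rewrite subn1 doubleS -addn2 tm_sum_addn_double.
Qed.

Lemma tm_sum1 : [/\ tm_sum 1 0 = 1, tm_sum 1 1 = -1 & tm_sum 1 2 = 0].
Proof. by rewrite /tm_sum /tm !big_nat_recr //= !big_geq. Qed.

Lemma tm_sum2 : [/\ tm_sum 2 0 = 2, tm_sum 2 1 = -1 & tm_sum 2 2 = -1].
Proof. by rewrite /tm_sum /tm !big_nat_recr //= !big_geq. Qed.

Lemma Delta3E a b :
  Delta3 a b = \sum_(0 <= i < b | ((a <= i) && (3 %| i))%N) tm i.
Proof.
rewrite /Delta3 -!sum1dep_card -!natz !natr_sum big_mkord.
rewrite [X in X - _]big_mkcond [X in _ - X]big_mkcond [RHS]big_mkcond -sumrB.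
apply: eq_bigr => i _; rewrite /tm /evil /odious -signr_odd.
by case: ((a <= i) && (3 %| i))%N; case: (odd (popcount i)).
Qed.

Lemma Delta3_shift a c :
  Delta3 a (a + c) = \sum_(0 <= i < c | (3 %| i + a)%N) tm (i + a).
Proof.
rewrite Delta3E (@big_cat_nat _ _ _ a) ?leq_addr //= big_nat_cond big_pred0; last first.
  by move=> i; case: ltnP.
rewrite add0r -{1}(add0n a) big_addn addnC addnK.
by apply: eq_bigl => i; rewrite leq_addl.
Qed.

(* The residue [2 * a] is [- a] modulo 3. *)
Lemma Delta3_tm_sum a m (s : int) :
  (forall i, (i < 2 ^ m)%N -> tm (i + a) = s * tm i) ->
  Delta3 a (a + 2 ^ m) = s * tm_sum m (2 * a).
Proof.
move=> tm_shift; rewrite Delta3_shift /tm_sum mulr_sumr big_mkcond /=.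
rewrite big_nat_cond [RHS]big_nat_cond; apply: eq_bigr => i /andP[/andP[_ i_lt] _].
have -> : (3 %| i + a)%N = (i == 2 * a %[mod 3]) by apply/eqP/eqP; lia.
by rewrite tm_shift //; case: (_ == _) => /=; ring.
Qed.

Lemma expn2_mod3 n : 2 ^ n = (if odd n then 2 else 1) %[mod 3].
Proof. by elim: n => [|n IH] //; rewrite expnS -modnMmr IH /=; case: (odd n). Qed.

Lemma Delta3_pow2 n : Delta3 0 (2 ^ n) = tm_sum n 0.
Proof. by rewrite -[(2 ^ n)%N]add0n (@Delta3_tm_sum 0 n 1) ?mul1r // => i; rewrite addn0 mul1r. Qed.

Lemma Delta3_pow2_shift n m : (m < n)%N ->
  Delta3 (2 ^ n) (2 ^ n + 2 ^ m) = - tm_sum m (if odd n then 1 else 2).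
Proof.
move=> m_lt_n; rewrite (@Delta3_tm_sum _ _ (-1)) => [|i i_lt].
  rewrite mulN1r; congr (- _); apply: tm_sum_mod; have := expn2_mod3 n.
  by case: (odd n) => h; lia.
rewrite tm_addn_pow2 ?mulN1r //; apply: (leq_trans i_lt).
by rewrite leq_exp2l // ltnW.
Qed.

(* Adding [2 ^ n + 2 ^ (n - 2)] to [i < 2 ^ m] sets two bits, so the sign is kept. *)
Lemma Delta3_pow2_shift2 n m : (m + 3 <= n)%N ->
  Delta3 (2 ^ n + 2 ^ (n - 2)) (2 ^ n + 2 ^ (n - 2) + 2 ^ m)
    = tm_sum m (if odd n then 2 else 1).
Proof.
move=> mn; have pow_n : (2 ^ n = 4 * 2 ^ (n - 2))%N.
  by rewrite -[4%N]/(2 ^ 2)%N -expnD subnKC //; lia.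
rewrite (@Delta3_tm_sum _ _ 1) ?mul1r => [|i i_lt].
  apply: tm_sum_mod; have := expn2_mod3 (n - 2).
  have -> : odd (n - 2) = odd n by rewrite oddB ?addbF //; lia.
  by rewrite pow_n; case: (odd n) => h; lia.
have pow_m : (2 ^ m <= 2 ^ (n - 2))%N by rewrite leq_exp2l //; lia.
rewrite mul1r addnCA addnC tm_addn_pow2; last by lia.
by rewrite tm_addn_pow2 ?opprK //; lia.
Qed.

Lemma even_half_pred m : ~~ odd m -> m.-1./2 = (m./2 - 1)%N.
Proof.
move=> /negbTE m_even; rewrite -(odd_double_half m) m_even add0n doubleK.
by case: m./2 => // k; rewrite doubleS /= uphalf_double subn1.
Qed.

Theorem theorem3 :
  (forall n : nat, (1 <= n)%N ->
     Delta3 0 (2 ^ n) =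
       (if odd n then (3 ^ (n.-1./2))%:Z else 2 * (3 ^ (n./2 - 1))%:Z))
  /\
  (forall n m : nat,
     (odd n -> (1 <= m)%N -> (m <= n - 1)%N ->
        Delta3 (2 ^ n) (2 ^ n + 2 ^ m) = (3 ^ (m.-1./2))%:Z) /\
     (~~ odd n -> ~~ odd m -> (2 <= m)%N -> (m + 2 <= n)%N ->
        Delta3 (2 ^ n) (2 ^ n + 2 ^ m) = (3 ^ (m./2 - 1))%:Z) /\
     (~~ odd n -> odd m -> (1 <= m)%N -> (m + 1 <= n)%N ->
        Delta3 (2 ^ n) (2 ^ n + 2 ^ m) = 0))
  /\
  (forall n m : nat,
     (~~ odd n -> (1 <= m)%N -> (m + 3 <= n)%N ->
        Delta3 (2 ^ n + 2 ^ (n - 2)) (2 ^ n + 2 ^ (n - 2) + 2 ^ m)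
          = - (3 ^ (m.-1./2))%:Z) /\
     (odd n -> ~~ odd m -> (2 <= m)%N -> (m + 3 <= n)%N ->
        Delta3 (2 ^ n + 2 ^ (n - 2)) (2 ^ n + 2 ^ (n - 2) + 2 ^ m)
          = - (3 ^ (m./2 - 1))%:Z) /\
     (odd n -> odd m -> (1 <= m)%N -> (m + 4 <= n)%N ->
        Delta3 (2 ^ n + 2 ^ (n - 2)) (2 ^ n + 2 ^ (n - 2) + 2 ^ m) = 0)).
Proof.
have [s10 s11 s12] := tm_sum1; have [s20 s21 s22] := tm_sum2.
split; [|split].
- move=> n n_gt0; rewrite Delta3_pow2; case: ifP => n_odd.
    by rewrite tm_sum_odd // s10 mulr1.
  by rewrite tm_sum_even ?n_odd // s20 mulrC.
- move=> n m; split; [|split]=> [n_odd m_gt0 mn|n_even m_even m_ge2 mn|n_even m_odd m_gt0 mn];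
    (rewrite Delta3_pow2_shift; last lia).
  + rewrite n_odd; case: (boolP (odd m)) => m_odd.
      by rewrite tm_sum_odd // s11 mulrN1 opprK.
    by rewrite even_half_pred // tm_sum_even // s21 mulrN1 opprK.
  + by rewrite (negbTE n_even) tm_sum_even ?s22 ?mulrN1 ?opprK //; lia.
  + by rewrite (negbTE n_even) tm_sum_odd // s12 mulr0 oppr0.
- move=> n m; split; [|split]=> [n_even m_gt0 mn|n_odd m_even m_ge2 mn|n_odd m_odd m_gt0 mn];
    (rewrite Delta3_pow2_shift2; last lia).
  + rewrite (negbTE n_even); case: (boolP (odd m)) => m_odd.
      by rewrite tm_sum_odd // s11 mulrN1.
    by rewrite even_half_pred // tm_sum_even // s21 mulrN1.
  + by rewrite n_odd tm_sum_even ?s22 ?mulrN1 //; lia.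
  + by rewrite n_odd tm_sum_odd // s12 mulr0.
Qed.
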